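(* Let $N\ge 2$ be an integer and $\tau>0$. For $t\in\{0,\tau,2\tau,\dots\}$ let $u_j^t=u(j,t)$, $j=0,\dots,N$, be defined by prescribed initial values $u(j,0)$ with $0\le u(j,0)\le 1$ for $j=0,\dots,N$, the Dirichlet boundary condition $u_0^t=u_N^t=0$ for all $t$, and the iteration, for $j=1,\dots,N-1$, $$u_j^{t+\tau}=u_j^t+\frac{u_j^tu_{j-1}^t}{2}\bigl(u_j^t+u_{j-1}^t-1\bigr)\bigl(u_{j-1}^t-u_j^t\bigr)+\frac{u_j^tu_{j+1}^t}{2}\bigl(u_j^t+u_{j+1}^t-1\bigr)\bigl(u_{j+1}^t-u_j^t\bigr).$$ Then the total density is conserved: for every $t\in\{0,\tau,2\tau,\dots\}$, $$\sum_{j=1}^{N-1}u(j,t+\tau)=\sum_{j=1}^{N-1}u(j,t).$$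
   Context: This is an aggregation–diffusion lattice model for a cell density on the grid points $x_j=j/N$; $\tau$ is the time step. *)

From HB Require Import structures.
From mathcomp Require Import all_boot all_order all_algebra.
From mathcomp Require Import reals.
Set Implicit Arguments. Unset Strict Implicit. Unset Printing Implicit Defensive.
Import Order.TTheory GRing.Theory Num.Theory.
Local Open Scope ring_scope.

Definition lattice_step {R : realType} (u : nat -> R -> R) (j : nat) (t : R) : R :=
  u j t
  + (u j t * u j.-1 t / 2) * (u j t + u j.-1 t - 1) * (u j.-1 t - u j t)
  + (u j t * u j.+1 t / 2) * (u j t + u j.+1 t - 1) * (u j.+1 t - u j t).

From HB Require Import structures.
From mathcomp Require Import all_boot all_order all_algebra.
From mathcomp Require Import reals ring.
Import Order.TTheory GRing.Theory Num.Theory.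
Local Open Scope ring_scope.

(* The scheme is in conservation form: the update at site j is the difference
   of the fluxes through the two bonds (j, j+1) and (j-1, j), so the total mass
   changes only by the fluxes through the boundary bonds, and these vanish
   because the flux carries the factor u_j u_(j+1) and u_0 = u_N = 0. *)

Definition bond_flux {F : fieldType} (a b : F) : F :=
  (a * b / 2) * (a + b - 1) * (b - a).

Lemma bond_flux0l {F : fieldType} (b : F) : bond_flux 0 b = 0.
Proof. by rewrite /bond_flux !(mul0r, mulr0). Qed.

Lemma bond_flux0r {F : fieldType} (a : F) : bond_flux a 0 = 0.
Proof. by rewrite /bond_flux !(mul0r, mulr0). Qed.

Lemma lattice_step_flux {R : realType} (u : nat -> R -> R) (j : nat) (t : R) :
  lattice_step u j t =
  u j t + (bond_flux (u j t) (u j.+1 t) - bond_flux (u j.-1 t) (u j t)).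
Proof. by rewrite /lattice_step /bond_flux; ring. Qed.

Lemma sum_conservation_form {V : zmodType} (m n : nat) (v w G : nat -> V) :
  (m <= n)%N ->
  (forall j, (m <= j < n)%N -> w j = v j + (G j.+1 - G j)) ->
  \sum_(m <= j < n) w j = \sum_(m <= j < n) v j + (G n - G m).
Proof.
move=> le_mn wE.
by rewrite -telescope_sumr // -big_split /=; apply: eq_big_nat.
Qed.

Theorem theorem3p2 (R : realType) (N : nat) (tau : R) (u : nat -> R -> R)
  (hN : (2 <= N)%N) (htau : 0 < tau)
  (hinit : forall j : nat, (j <= N)%N -> 0 <= u j 0 <= 1)
  (hbd0 : forall k : nat, u 0%N (k%:R * tau) = 0)
  (hbdN : forall k : nat, u N (k%:R * tau) = 0)
  (hstep : forall (k j : nat), (1 <= j)%N -> (j <= N.-1)%N ->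
     u j (k%:R * tau + tau) = lattice_step u j (k%:R * tau)) :
  forall k : nat,
    \sum_(1 <= j < N) u j (k%:R * tau + tau) = \sum_(1 <= j < N) u j (k%:R * tau).
Proof.
move=> k; set t := k%:R * tau.
pose G j := bond_flux (u j.-1 t) (u j t).
rewrite (@sum_conservation_form _ _ _ (u^~ t) _ G) ?(ltnW hN) //.
- by rewrite /G hbdN hbd0 bond_flux0l bond_flux0r subrr addr0.
- move=> j /andP[j_ge1 j_ltN].
  have j_le_predN : (j <= N.-1)%N by rewrite -ltnS (ltn_predK j_ltN).
  by rewrite hstep // lattice_step_flux.
Qed.
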